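(* Let $m\ge2$, let $K/F$ be a cyclic Galois field extension of degree $m$ with $\mathrm{Gal}(K/F)=\langle\sigma\rangle$, and suppose $F$ has no non-trivial $m$th root of unity. Let $A=(K/F,\sigma,d)$ be a nonassociative cyclic algebra of degree $m$ where $d\in K^\times$ is not contained in any proper subfield of $K$. Then every $F$-automorphism of $A$ restricts to the identity on $K$, and $\mathrm{Aut}_F(A)\cong\ker(N_{K/F})$. In particular, all automorphisms of $A$ are inner.
   Context: For $\sigma\in\mathrm{Aut}(K)$, $K[t;\sigma]$ is the twisted polynomial ring (polynomials $\sum a_it^i$, $a_i\in K$, with multiplication determined by $ta=\sigma(a)t$). For $d\in K^\times$, $(K/F,\sigma,d)$ is the $F$-vector space of polynomials of degree $<m$ in $K[t;\sigma]$ with multiplication $g\circ h=$ remainder of $gh$ on right division by $t^m-d$ (i.e. $gh=q(t^m-d)+r$ with $\deg r<m$); it is a unital nonassociative $F$-algebra containing $K$. An automorphism $G$ of a unital algebra $A$ is inner if there is $c\in A$ with a left inverse $c_l$ (i.e. $c_lc=1$) such that $G(x)=(c_lx)c$ for all $x\in A$. *)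

From HB Require Import structures.
From mathcomp Require Import all_boot all_order all_algebra all_fingroup all_field.
Set Implicit Arguments. Unset Strict Implicit. Unset Printing Implicit Defensive.
Import GRing.Theory.
Local Open Scope ring_scope.

(* K is the field L : splittingFieldType F; an element sum_{i<m} a_i t^i of A
   is represented by its coefficient function {ffun 'I_m -> L}.
   The multiplication "remainder of g h on right division by t^m - d" in
   K[t;sigma] unfolds to
     (a t^i)(b t^j) = a sigma^i(b) t^(i+j)                   if i+j < m,
     (a t^i)(b t^j) = a sigma^i(b) sigma^(i+j-m)(d) t^(i+j-m) if i+j >= m,
   since t^(m+k) = t^k (t^m - d) + sigma^k(d) t^k. *)
Section CycAlg.
Variables (F : fieldType) (L : splittingFieldType F) (m : nat).
Variables (sigma : gal_of {:L}) (d : L).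

Definition cycA := {ffun 'I_m -> L}.

Definition cyc_mul (g h : cycA) : cycA :=
  [ffun k : 'I_m =>
     \sum_(i < m) \sum_(j < m | (i + j == k)%N) g i * (sigma ^+ i)%g (h j)
   + \sum_(i < m) \sum_(j < m | (i + j == k + m)%N)
        g i * (sigma ^+ i)%g (h j) * (sigma ^+ k)%g d].

Definition cyc_one : cycA := [ffun k : 'I_m => if (k == 0 :> nat) then 1 else 0].

Definition cyc_emb (x : L) : cycA :=
  [ffun k : 'I_m => if (k == 0 :> nat) then x else 0].

Definition is_FAut (G : cycA -> cycA) : Prop :=
  [/\ forall (a : F) (x y : cycA), G (a *: x + y) = a *: G x + G y,
      bijective G,
      G cyc_one = cyc_one &
      forall x y : cycA, G (cyc_mul x y) = cyc_mul (G x) (G y)].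

Definition is_inner (G : cycA -> cycA) : Prop :=
  exists c cl : cycA, cyc_mul cl c = cyc_one /\
    forall x : cycA, G x = cyc_mul (cyc_mul cl x) c.

End CycAlg.

From HB Require Import structures.
From mathcomp Require Import all_boot all_order all_algebra all_fingroup all_solvable all_field.
From mathcomp Require Import zify ring.
Set Implicit Arguments. Unset Strict Implicit. Unset Printing Implicit Defensive.
Import GRing.Theory.
Local Open Scope ring_scope.

(* An F-automorphism G of A maps the left nucleus of A onto itself, and that
   nucleus is K because d is moved by every nontrivial power of sigma; so G
   restricts to some sigma^s on K.  Comparing G(t) G(a) = G(sigma a) G(t)
   coefficientwise gives G(t) = k t, hence G(t^i) = N_i(k) t^i with
   N_i(k) = k sigma(k) ... sigma^(i-1)(k), and t^m = d gives G(d) = N(k) d.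
   Since N(k) lies in F and (sigma^s)^m = 1, N(k)^m = 1, so N(k) = 1 and G
   fixes d; as d generates K, G is the identity on K.  Thus G is the diagonal
   map sum y_i t^i |-> sum y_i N_i(k) t^i, every k of norm 1 yields such an
   automorphism, and Hilbert 90 (k = b / sigma b) makes it x |-> (b x) b^-1. *)

Section CyclicAlgebraMul.
Variables (F : fieldType) (L : splittingFieldType F) (n : nat).
Variables (sigma : gal_of {:L}) (d : L).
Local Notation m := n.+1.
Local Notation A := (cycA L m).
Local Notation mul := (cyc_mul sigma d).

Definition cyc_mon (a : L) (i : nat) : A :=
  [ffun k : 'I_m => if k == i :> nat then a else 0].

Lemma subm_subproof (k i : 'I_m) :
  ((if i <= k then k - i else k + m - i) < m)%N.
Proof. by have := ltn_ord i; have := ltn_ord k; case: (leqP i k); lia. Qed.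

Definition subm (k i : 'I_m) : 'I_m := Ordinal (subm_subproof k i).

Lemma subm_eq (k i j : 'I_m) : (subm k i == j :> nat) = (i == subm k j :> nat).
Proof.
have := ltn_ord i; have := ltn_ord j; have := ltn_ord k; rewrite /=.
by case: (leqP i k); case: (leqP j k) => *; apply/eqP/eqP; lia.
Qed.

Lemma subm0 (k : 'I_m) : subm k ord0 = k.
Proof. by apply: val_inj; rewrite /= subn0. Qed.

Lemma cyc_mulE (g h : A) k : mul g h k =
  \sum_(i < m) g i * (sigma ^+ i)%g (h (subm k i)) *
     (if (i <= k)%N then 1 else (sigma ^+ k)%g d).
Proof.
rewrite ffunE -big_split /=; apply: eq_bigr => i _.
have := ltn_ord i; have := ltn_ord k.
case: (leqP i k) => hik hk hi.
- rewrite (big_pred1 (subm k i)) ?big_pred0 ?addr0 ?mulr1 //.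
    by move=> j /=; apply/negbTE; have := ltn_ord j; lia.
  by move=> j; rewrite /= -val_eqE /= hik; apply/eqP/eqP; lia.
- rewrite big_pred0 ?add0r; last first.
    by move=> j /=; apply/negbTE; have := ltn_ord j; lia.
  rewrite (big_pred1 (subm k i)) //.
  by move=> j; rewrite /= -val_eqE /= leqNgt hik; apply/eqP/eqP; lia.
Qed.

Lemma cyc_mon_sum (x : A) : x = \sum_(i < m) cyc_mon (x i) i.
Proof.
apply/ffunP => k; rewrite sum_ffunE (bigD1 k) //= ffunE eqxx big1 ?addr0 //.
by move=> i ik; rewrite ffunE eq_sym val_eqE (negbTE ik).
Qed.

Lemma cyc_monD a b i : cyc_mon (a + b) i = cyc_mon a i + cyc_mon b i.
Proof. by apply/ffunP => k; rewrite !ffunE; case: ifP; rewrite ?addr0. Qed.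

Lemma cyc_monZ (c : F) a i : cyc_mon (c *: a) i = c *: cyc_mon a i.
Proof. by apply/ffunP => k; rewrite !ffunE; case: ifP; rewrite ?scaler0. Qed.

Lemma cyc_mon_inj i : (i < m)%N -> injective (cyc_mon^~ i).
Proof. by move=> lt_im a b /ffunP /(_ (Ordinal lt_im)); rewrite !ffunE /= eqxx. Qed.

Lemma cyc_mul_mon a b (i j : nat) : (i < m)%N -> (j < m)%N ->
  mul (cyc_mon a i) (cyc_mon b j) =
  if (i + j < m)%N then cyc_mon (a * (sigma ^+ i)%g b) (i + j)
  else cyc_mon (a * (sigma ^+ i)%g b * (sigma ^+ (i + j - m))%g d) (i + j - m).
Proof.
move=> lt_im lt_jm; apply/ffunP => k.
rewrite cyc_mulE (bigD1 (Ordinal lt_im)) //= big1 ?addr0; last first.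
  by move=> i' /negbTE; rewrite -val_eqE /= ffunE => ->; rewrite !mul0r.
have := ltn_ord k; rewrite !ffunE /= eqxx.
case: (ltnP (i + j) m) => hij; rewrite ffunE;
case: (leqP i k) => h1; case: eqP => h2; case: eqP => h3 hk; try lia;
  by rewrite ?rmorph0 ?mulr0 ?mul0r ?mulr1 // h3.
Qed.

Lemma cyc_mul_monr x b (p : 'I_m) k :
  mul x (cyc_mon b p) k = x (subm k p) * (sigma ^+ subm k p)%g b *
     (if (p <= k)%N then 1 else (sigma ^+ k)%g d).
Proof.
have wrap : (subm k p <= k)%N = (p <= k)%N.
  have := ltn_ord p; have := ltn_ord k; rewrite /=.
  by case: (leqP p k) => *; apply/idP/idP; lia.
rewrite cyc_mulE (bigD1 (subm k p)) //= big1 ?addr0.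
  by rewrite ffunE subm_eq eqxx wrap.
by move=> i ik; rewrite ffunE subm_eq val_eqE (negbTE ik) rmorph0 mulr0 mul0r.
Qed.

Lemma cyc_mul_mon0r x b : mul x (cyc_mon b 0) = [ffun k => x k * (sigma ^+ k)%g b].
Proof. by apply/ffunP => k; rewrite (cyc_mul_monr x b ord0) ffunE subm0 mulr1. Qed.

Lemma cyc_mul_mon0l a x : mul (cyc_mon a 0) x = [ffun k => a * x k].
Proof.
apply/ffunP => k; rewrite cyc_mulE ffunE (bigD1 ord0) //= big1 ?addr0.
  by rewrite ffunE /= subm0 expg0 gal_id mulr1.
by move=> i /negbTE i0; rewrite ffunE -val_eqE /= in i0 *; rewrite i0 !mul0r.
Qed.

Lemma cyc_mon0M a b : cyc_mon (a * b) 0 = mul (cyc_mon a 0) (cyc_mon b 0).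
Proof. by apply/ffunP => k; rewrite cyc_mul_mon0l !ffunE; case: ifP; rewrite ?mulr0. Qed.

Definition cyc_lnuc (a : A) : Prop := forall x y, mul (mul a x) y = mul a (mul x y).

Lemma cyc_lnuc_mon0 c : cyc_lnuc (cyc_mon c 0).
Proof.
move=> x y; apply/ffunP => k; rewrite !cyc_mul_mon0l [RHS]ffunE !cyc_mulE mulr_sumr.
by apply: eq_bigr => i _; rewrite ffunE !mulrA.
Qed.

Hypothesis sigmaX_moves_d : forall i, (0 < i < m)%N -> (sigma ^+ i)%g d != d.

(* Test the nucleus condition on (t^(m-i), t^i): their product is d, and the
   two bracketings differ at t^i by the factor sigma^i(d) - d. *)
Lemma cyc_lnucP a : cyc_lnuc a -> a = cyc_mon (a ord0) 0.
Proof.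
move=> Na; apply/ffunP => i; rewrite ffunE.
have [i0|i_neq0] := eqVneq (i : nat) 0%N.
  by rewrite (_ : i = ord0) //; apply: val_inj.
have lt_im := ltn_ord i; have i_gt0 : (0 < i)%N by rewrite lt0n.
have lt_pm : (m - i < m)%N by lia.
have := congr1 (fun z : A => z i) (Na (cyc_mon 1 (m - i)) (cyc_mon 1 i)).
rewrite /= (cyc_mul_monr _ _ (Ordinal lt_im)) (cyc_mul_mon _ _ lt_pm lt_im).
rewrite (cyc_mul_monr _ _ (Ordinal lt_pm)) leqnn.
have -> : subm i (Ordinal lt_im) = ord0 by apply: val_inj; rewrite /= leqnn subnn.
have -> : subm ord0 (Ordinal lt_pm) = i.
  by apply: val_inj; rewrite /= leqNgt subn_gt0 lt_im /=; lia.
rewrite ifF; last by apply/negbTE; rewrite -ltnNge /=; lia.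
rewrite ifF; last by lia.
rewrite subnK ?(ltnW lt_im) // subnn !expg0 !gal_id !rmorph1 !mulr1 mul1r.
rewrite cyc_mul_mon0r ffunE => /eqP; rewrite -subr_eq0 -mulrBr mulf_eq0 subr_eq0.
case/orP=> [/eqP //|]; rewrite eq_sym => /eqP sd.
by have := sigmaX_moves_d (i := i); rewrite lt_im i_gt0 sd eqxx => /(_ isT).
Qed.

End CyclicAlgebraMul.

Arguments cyc_mon {F L n}.

Lemma galXD F (L : splittingFieldType F) (g : gal_of {:L}) i j x :
  (g ^+ (i + j))%g x = (g ^+ j)%g ((g ^+ i)%g x).
Proof. by rewrite expgD galM ?memvf. Qed.

Lemma gal_fix_generator_eq1 F (L : splittingFieldType F) (d : L) (g : gal_of {:L}) :
  (forall E : {subfield L}, d \in E -> (E :> {vspace L}) = fullv) -> g d = d -> g = 1%g.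
Proof.
move=> d_gen gd; have dE : d \in fixedField [set g].
  by apply/fixedFieldP; [exact: memvf | move=> x /set1P ->].
apply/eqP/gal_eqP => x _; rewrite gal_id.
have : x \in fixedField [set g] by rewrite (d_gen _ dE) memvf.
by case/mem_fixedFieldP => _ /(_ _ (set11 _)).
Qed.

Section PartialNorm.
Variables (F : fieldType) (L : splittingFieldType F) (sigma : gal_of {:L}).

Definition pnorm (k : L) i := \prod_(0 <= j < i) (sigma ^+ j)%g k.

Lemma pnorm0 k : pnorm k 0 = 1.
Proof. by rewrite /pnorm big_geq. Qed.

Lemma pnormS k i : pnorm k i.+1 = k * sigma (pnorm k i).
Proof.
rewrite /pnorm big_nat_recl // expg0 gal_id rmorph_prod; congr (_ * _).
by apply: eq_bigr => j _; rewrite expgSr galM ?memvf.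
Qed.

Lemma pnorm1 k : pnorm k 1 = k.
Proof. by rewrite pnormS pnorm0 rmorph1 mulr1. Qed.

Lemma pnormSr k i : pnorm k i.+1 = pnorm k i * (sigma ^+ i)%g k.
Proof. by rewrite /pnorm big_nat_recr. Qed.

Lemma pnormD k i j : pnorm k (i + j) = pnorm k i * (sigma ^+ i)%g (pnorm k j).
Proof.
elim: j => [|j IH]; first by rewrite addn0 pnorm0 rmorph1 mulr1.
by rewrite addnS !pnormSr IH rmorphM mulrA addnC galXD.
Qed.

Lemma pnorm_neq0 k i : k != 0 -> pnorm k i != 0.
Proof.
move=> k_neq0; elim: i => [|i IH]; first by rewrite pnorm0 oner_neq0.
by rewrite pnormSr mulf_neq0 // fmorph_eq0.
Qed.

Lemma pnorm_coboundary b i : b != 0 -> pnorm (b / sigma b) i = b / (sigma ^+ i)%g b.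
Proof.
move=> b_neq0; elim: i => [|i IH]; first by rewrite pnorm0 expg0 gal_id divff.
have shift : (sigma ^+ i)%g (sigma b) = (sigma ^+ i.+1)%g b.
  by rewrite -add1n galXD expg1.
by rewrite pnormSr IH fmorph_div -shift mulrA divfK // fmorph_eq0.
Qed.

End PartialNorm.

Section CyclicGalois.
Variables (F : fieldType) (L : splittingFieldType F) (n : nat) (sigma : gal_of {:L}).
Local Notation m := n.+1.
Hypothesis dimL : \dim {:L} = m.
Hypothesis galL : galois 1%AS {:L}.
Hypothesis Gal_cyclic : 'Gal({:L} / 1%AS)%g = <[sigma]>%g.

Lemma order_sigma : #[sigma]%g = m.
Proof. by rewrite orderE -Gal_cyclic -galois_dim // dimv1 divn1 dimL. Qed.

Lemma sigmaXm x : (sigma ^+ m)%g x = x.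
Proof. by rewrite -order_sigma expg_order gal_id. Qed.

Lemma sigmaX_moves_generator (d : L) :
  (forall E : {subfield L}, d \in E -> (E :> {vspace L}) = fullv) ->
  forall i, (0 < i < m)%N -> (sigma ^+ i)%g d != d.
Proof.
move=> d_gen i /andP[i_gt0 lt_im]; apply/eqP => /(gal_fix_generator_eq1 d_gen) /eqP.
by rewrite -order_dvdn order_sigma => /(dvdn_leq i_gt0); rewrite leqNgt lt_im.
Qed.

Lemma galNorm_pnorm a : galNorm 1%AS {:L} a = pnorm sigma a m.
Proof.
rewrite /galNorm Gal_cyclic.
have -> : <[sigma]>%g = [set (sigma ^+ (i : nat))%g | i : 'I_m].
  apply/setP => x; apply/idP/imsetP.
    by case/cyclePmin => i; rewrite order_sigma => lt_im ->; exists (Ordinal lt_im).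
  by case => i _ ->; exact: mem_cycle.
rewrite big_imset /=; last first.
  by move=> i j _ _ /eqP; rewrite eq_expg_ord ?order_sigma // => /eqP.
by rewrite /pnorm big_mkord; apply: eq_bigl.
Qed.

Lemma pnorm_in1 a : pnorm sigma a m \in 1%VS.
Proof.
have := galNorm_fixedField 1%AS (memvf a).
by rewrite (galois_fixedField galL) galNorm_pnorm.
Qed.

Lemma pnorm_subm k (i j : 'I_m) : pnorm sigma k m = 1 ->
  pnorm sigma k i * (sigma ^+ i)%g (pnorm sigma k (subm j i)) = pnorm sigma k j.
Proof.
move=> Nk; have := ltn_ord i; have := ltn_ord j.
rewrite -pnormD /=; case: (leqP i j) => le_ij *; first by rewrite subnKC.
by rewrite (_ : (i + (j + m - i))%N = (m + j)%N) ?pnormD ?Nk ?mul1r ?sigmaXm //; lia.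
Qed.

End CyclicGalois.

Section AutomorphismRestriction.
Variables (F : fieldType) (L : splittingFieldType F) (n : nat).
Variables (sigma : gal_of {:L}) (d : L).
Local Notation m := n.+1.
Local Notation A := (cycA L m).
Local Notation mul := (cyc_mul sigma d).
Variable G : A -> A.
Hypothesis HG : is_FAut sigma d G.

Lemma FAutD x y : G (x + y) = G x + G y.
Proof. by case: HG => G_lin _ _ _; have := G_lin 1 x y; rewrite !scale1r. Qed.

Lemma FAut0 : G 0 = 0.
Proof. by apply: (addrI (G 0)); rewrite -FAutD !addr0. Qed.

Lemma FAutZ (c : F) x : G (c *: x) = c *: G x.
Proof. by case: HG => G_lin _ _ _; have := G_lin c x 0; rewrite !addr0 FAut0 addr0. Qed.

Lemma FAutM x y : G (mul x y) = mul (G x) (G y).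
Proof. by case: HG. Qed.

Lemma FAut1 : G (cyc_mon 1 0) = cyc_mon 1 0.
Proof. by case: HG. Qed.

Lemma FAut_sum (f : 'I_m -> A) : G (\sum_(i < m) f i) = \sum_(i < m) G (f i).
Proof. exact: (big_morph G FAutD FAut0). Qed.

Lemma FAut_lnuc a : cyc_lnuc sigma d a -> cyc_lnuc sigma d (G a).
Proof.
case: HG => _ [G' GK G'K] _ _ Na x y.
by rewrite -(G'K x) -(G'K y) -!FAutM Na.
Qed.

Definition restrK (x : L) : L := G (cyc_mon x 0) ord0.

Hypothesis sigmaX_moves_d : forall i, (0 < i < m)%N -> (sigma ^+ i)%g d != d.

Lemma FAut_mon0 x : G (cyc_mon x 0) = cyc_mon (restrK x) 0.
Proof. exact/(cyc_lnucP sigmaX_moves_d)/FAut_lnuc/cyc_lnuc_mon0. Qed.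

Lemma restrKD x y : restrK (x + y) = restrK x + restrK y.
Proof.
by apply: (cyc_mon_inj (ltn0Sn n)); rewrite cyc_monD -!FAut_mon0 -FAutD -cyc_monD.
Qed.

Lemma restrKZ (c : F) x : restrK (c *: x) = c *: restrK x.
Proof.
by apply: (cyc_mon_inj (ltn0Sn n)); rewrite cyc_monZ -!FAut_mon0 -FAutZ -cyc_monZ.
Qed.

Lemma restrKM x y : restrK (x * y) = restrK x * restrK y.
Proof.
apply: (cyc_mon_inj (ltn0Sn n)).
by rewrite (cyc_mon0M n sigma d) -!FAut_mon0 (cyc_mon0M n sigma d) FAutM !FAut_mon0.
Qed.

Lemma restrK1 : restrK 1 = 1.
Proof. by apply: (cyc_mon_inj (ltn0Sn n)); rewrite -FAut_mon0 FAut1. Qed.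

Lemma restrK_is_linear : linear_for *:%R restrK.
Proof. by move=> c u v; rewrite restrKD restrKZ. Qed.

HB.instance Definition _ := GRing.isLinear.Build F L L *:%R restrK restrK_is_linear.

Hypothesis galL : galois 1%AS {:L}.
Hypothesis Gal_cyclic : 'Gal({:L} / 1%AS)%g = <[sigma]>%g.

Lemma restrK_gal : exists s, restrK =1 (sigma ^+ s)%g.
Proof.
have hom : kHom 1 fullv (linfun restrK).
  apply/kHomP_tmp; split.
    by move=> x /vlineP[c ->]; rewrite !lfunE /= restrKZ restrK1.
  by move=> x y _ _; rewrite !lfunE /= restrKM.
have normalL : normalField (1%AS : {vspace L}) {:L} by case/and3P: galL.
have sub1L : (1%AS <= {:L}%AS <= {:L}%AS)%VS by rewrite subvf subvv.
have [g] := kHom_to_gal sub1L normalL hom.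
rewrite Gal_cyclic => /cycleP[s ->] restrK_s.
by exists s => x; rewrite -restrK_s ?memvf // lfunE.
Qed.

End AutomorphismRestriction.

Section Automorphisms.
Variables (F : fieldType) (L : splittingFieldType F) (n : nat).
Variables (sigma : gal_of {:L}) (d : L).
Local Notation m := n.+2.
Local Notation A := (cycA L m).
Local Notation mul := (cyc_mul sigma d).
Local Notation t := (cyc_mon 1 1 : A).

Definition kappa (G : A -> A) : L := G t (Ordinal (isT : (1 < m)%N)).

Definition diag_aut (k : L) (y : A) : A := [ffun i => y i * pnorm sigma k i].

Hypothesis dimL : \dim {:L} = m.
Hypothesis galL : galois 1%AS {:L}.
Hypothesis Gal_cyclic : 'Gal({:L} / 1%AS)%g = <[sigma]>%g.

Section DiagonalAutomorphism.
Variable k : L.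
Hypothesis Nk : pnorm sigma k m = 1.

Lemma diag_aut_FAut : is_FAut sigma d (diag_aut k).
Proof.
have k_neq0 : k != 0.
  by apply: contra_eq_neq Nk => ->; rewrite pnormS mul0r eq_sym oner_neq0.
have Nki_neq0 i : pnorm sigma k i != 0 by exact: pnorm_neq0.
split.
- by move=> a x y; apply/ffunP => i; rewrite !ffunE mulrDl scalerAl.
- exists (fun y : A => [ffun i => y i / pnorm sigma k i]).
    by move=> y; apply/ffunP => i; rewrite !ffunE mulfK.
  by move=> y; apply/ffunP => i; rewrite !ffunE divfK.
- apply/ffunP => i; rewrite !ffunE; case: eqP => [->|_]; last by rewrite mul0r.
  by rewrite pnorm0 mulr1.
- move=> x y; apply/ffunP => j; rewrite ffunE !cyc_mulE mulr_suml.
  apply: eq_bigr => i _.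
  rewrite !ffunE -(pnorm_subm dimL galL Gal_cyclic i j Nk) rmorphM.
  ring.
Qed.

(* Hilbert 90 writes k = b / sigma(b), and then pnorm k i = b / sigma^i(b). *)
Lemma diag_aut_inner : is_inner sigma d (diag_aut k).
Proof.
have gen : generator 'Gal({:L} / 1%AS)%g sigma by rewrite /generator Gal_cyclic.
have /(Hilbert's_theorem_90 gen (memvf k))[b [_ b_neq0] ->] : galNorm 1%AS {:L} k == 1.
  by rewrite (galNorm_pnorm dimL galL Gal_cyclic) Nk.
exists (cyc_mon b^-1 0), (cyc_mon b 0); split; first by rewrite -cyc_mon0M mulfV.
move=> x; rewrite cyc_mul_mon0l cyc_mul_mon0r; apply/ffunP => i.
rewrite !ffunE pnorm_coboundary // fmorphV.
ring.
Qed.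

End DiagonalAutomorphism.

Lemma kappa_diag_aut k : kappa (diag_aut k) = k.
Proof. by rewrite /kappa !ffunE /= mul1r pnorm1. Qed.

Hypothesis rootsF : forall z : F, z ^+ m = 1 -> z = 1.
Hypothesis d_neq0 : d != 0.
Hypothesis d_gen : forall E : {subfield L}, d \in E -> (E :> {vspace L}) = fullv.

Let sigmaX_moves_d := sigmaX_moves_generator dimL galL Gal_cyclic d_gen.

Section OneAutomorphism.
Variable G : A -> A.
Hypothesis HG : is_FAut sigma d G.

Let restrK_gal := restrK_gal HG sigmaX_moves_d galL Gal_cyclic.
Let FAut_mon0 := FAut_mon0 HG sigmaX_moves_d.

(* G(t) G(a) = G(sigma a) G(t), read at t^j, forces sigma^j = sigma on the
   image of G|K. *)
Lemma FAut_t : G t = cyc_mon (kappa G) 1.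
Proof.
have [s restrK_s] := restrK_gal.
apply/ffunP => j; rewrite [RHS]ffunE.
have [j1|j_neq1] := eqVneq (j : nat) 1%N.
  by rewrite /kappa (_ : j = Ordinal (isT : (1 < m)%N)) //; apply: val_inj.
apply/eqP/negPn/negP => Gtj_neq0; move/eqP: j_neq1; apply.
have comm a : mul t (cyc_mon a 0) = mul (cyc_mon (sigma a) 0) t.
  by rewrite !cyc_mul_mon //= expg1 expg0 gal_id mul1r mulr1.
have shift a : (sigma ^+ s)%g (sigma a) = sigma ((sigma ^+ s)%g a).
  have := galXD sigma 1 s a; have := galXD sigma s 1 a.
  by rewrite addnC expg1 => <- <-.
have sigmaXj a : (sigma ^+ j)%g ((sigma ^+ s)%g a) = sigma ((sigma ^+ s)%g a).
  have := congr1 (fun z : A => z j) (congr1 G (comm a)).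
  rewrite /= !(FAutM HG) !FAut_mon0 cyc_mul_mon0r cyc_mul_mon0l !ffunE.
  rewrite !restrK_s shift.
  by rewrite [RHS]mulrC; apply: mulfI.
have : (sigma ^+ j)%g == (sigma ^+ 1)%g.
  rewrite -(inj_eq (mulgI (sigma ^+ s)%g)); apply/gal_eqP => a _.
  by rewrite !galM ?memvf // expg1 sigmaXj.
by rewrite eq_expg_mod_order (order_sigma dimL galL Gal_cyclic) !modn_small // => /eqP.
Qed.

Lemma FAut_tX i : (i < m)%N -> G (cyc_mon 1 i) = cyc_mon (pnorm sigma (kappa G) i) i.
Proof.
elim: i => [_|i IH lt_im]; first by rewrite pnorm0 (FAut1 HG).
have tX : cyc_mon 1 i.+1 = mul t (cyc_mon 1 i).
  by rewrite cyc_mul_mon ?(ltnW lt_im) // add1n lt_im expg1 rmorph1 mulr1.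
rewrite tX (FAutM HG) FAut_t IH ?(ltnW lt_im) //.
by rewrite cyc_mul_mon ?(ltnW lt_im) // add1n lt_im pnormS.
Qed.

Lemma restrK_d : restrK G d = pnorm sigma (kappa G) m * d.
Proof.
have tm : cyc_mon d 0 = mul t (cyc_mon 1 n.+1).
  by rewrite cyc_mul_mon // add1n ltnn subnn expg0 gal_id expg1 rmorph1 !mul1r.
apply: (cyc_mon_inj (ltn0Sn n.+1)).
rewrite -FAut_mon0 tm (FAutM HG) FAut_t FAut_tX // cyc_mul_mon // add1n ltnn subnn.
by rewrite expg0 gal_id -pnormS.
Qed.

(* N(kappa G) is a scalar c with (sigma^s)^j (d) = c^j d, so c^m = 1. *)
Lemma pnorm_kappa : pnorm sigma (kappa G) m = 1.
Proof.
have [c Nc] : exists c, pnorm sigma (kappa G) m = c *: 1.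
  by apply/vlineP; exact: pnorm_in1.
have [s restrK_s] := restrK_gal.
have sigmaXs_d j : (sigma ^+ s ^+ j)%g d = c ^+ j *: d.
  elim: j => [|j IH]; first by rewrite expg0 gal_id expr0 scale1r.
  rewrite expgSr galM ?memvf // IH linearZ /= -restrK_s restrK_d Nc -scalerAl mul1r.
  by rewrite scalerA -exprSr.
have : (c ^+ m - 1) *: d = 0.
  rewrite scalerBl scale1r -sigmaXs_d -expgM mulnC expgM.
  by rewrite -(order_sigma dimL galL Gal_cyclic) expg_order expg1n gal_id subrr.
move/eqP; rewrite scaler_eq0 (negbTE d_neq0) orbF subr_eq0 => /eqP /rootsF c1.
by rewrite Nc c1 scale1r.
Qed.

Lemma restrK_id x : restrK G x = x.
Proof.
have [s restrK_s] := restrK_gal.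
have : (sigma ^+ s)%g = 1%g.
  apply: (gal_fix_generator_eq1 d_gen).
  by rewrite -restrK_s restrK_d pnorm_kappa mul1r.
by rewrite restrK_s => ->; rewrite gal_id.
Qed.

Lemma FAutE : G =1 diag_aut (kappa G).
Proof.
move=> y; rewrite {1}(cyc_mon_sum y) (FAut_sum HG) [RHS]cyc_mon_sum.
apply: eq_bigr => i _.
have yi : cyc_mon (y i) i = mul (cyc_mon (y i) 0) (cyc_mon 1 i) :> A.
  rewrite cyc_mul_mon0l; apply/ffunP => j.
  by rewrite !ffunE; case: ifP; rewrite ?mulr1 ?mulr0.
rewrite yi (FAutM HG) FAut_mon0 restrK_id FAut_tX // cyc_mul_mon0l.
by apply/ffunP => j; rewrite !ffunE; case: ifP; rewrite ?mulr0.
Qed.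

Lemma FAut_inner : is_inner sigma d G.
Proof.
have [c [cl [clc inner]]] := diag_aut_inner pnorm_kappa.
by exists c, cl; split=> // x; rewrite FAutE.
Qed.

End OneAutomorphism.

Lemma kappa_comp G H : is_FAut sigma d G -> is_FAut sigma d H ->
  kappa (G \o H) = kappa G * kappa H.
Proof.
move=> HG HH; rewrite /kappa /= (FAut_t HH) (FAutE HG) !ffunE /= -/(kappa G).
by rewrite pnorm1 mulrC.
Qed.

End Automorphisms.

Theorem theorem2p5 (F : fieldType) (L : splittingFieldType F) (m : nat)
    (sigma : gal_of {:L}) (d : L) :
  (2 <= m)%N ->
  \dim {:L} = m ->
  galois 1%AS {:L} ->
  'Gal({:L} / 1%AS)%g = <[sigma]>%g ->
  (forall z : F, z ^+ m = 1 -> z = 1) ->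
  d != 0 ->
  (forall E : {subfield L}, d \in E -> (E :> {vspace L}) = fullv) ->
  [/\ (forall G : cycA L m -> cycA L m, is_FAut sigma d G -> forall x : L, G (cyc_emb m x) = cyc_emb m x),
      (exists Phi : (cycA L m -> cycA L m) -> L,
         [/\ forall G : cycA L m -> cycA L m, is_FAut sigma d G -> galNorm 1%AS {:L} (Phi G) = 1,
             forall G H : cycA L m -> cycA L m, is_FAut sigma d G -> is_FAut sigma d H ->
               Phi (G \o H) = Phi G * Phi H,
             forall G H : cycA L m -> cycA L m, is_FAut sigma d G -> is_FAut sigma d H ->
               Phi G = Phi H -> G =1 H &
             forall k : L, galNorm 1%AS {:L} k = 1 ->
               exists G : cycA L m -> cycA L m, is_FAut sigma d G /\ Phi G = k])
    & forall G : cycA L m -> cycA L m, is_FAut sigma d G -> is_inner sigma d G].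
Proof.
case: m => [|[|n]] // _ dimL galL Gal_cyclic rootsF d_neq0 d_gen.
have moves_d := sigmaX_moves_generator dimL galL Gal_cyclic d_gen.
have galNormE := galNorm_pnorm dimL galL Gal_cyclic.
have restrK_id := restrK_id dimL galL Gal_cyclic rootsF d_neq0 d_gen.
have pnorm_kappa := pnorm_kappa dimL galL Gal_cyclic rootsF d_neq0 d_gen.
have FAutE := FAutE dimL galL Gal_cyclic rootsF d_neq0 d_gen.
split.
- by move=> G HG x; rewrite (FAut_mon0 HG moves_d) restrK_id.
- exists (@kappa _ _ n); split.
  + by move=> G HG; rewrite galNormE pnorm_kappa.
  + by move=> G H; exact: kappa_comp.
  + by move=> G H HG HH eq_kappa x; rewrite (FAutE G HG) (FAutE H HH) eq_kappa.
  + move=> k; rewrite galNormE => Nk; exists (diag_aut sigma k).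
    by rewrite kappa_diag_aut; split=> //; exact: diag_aut_FAut.
- by move=> G; exact: FAut_inner.
Qed.
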